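(* Let $\mu\in\mathcal C$ be nilpotent, let $\mathfrak z$ be the centre of $(\mathfrak g,\mu)$, $\mathfrak z^\perp$ its orthogonal complement, $\mathrm{Pr}_{\mathfrak z},\mathrm{Pr}_{\mathfrak z^\perp}$ the orthogonal projections, $\mu_0:=\mathrm{Pr}_{\mathfrak z}\circ\mu$ and $\mu_1:=\mathrm{Pr}_{\mathfrak z^\perp}\circ\mu$. Let $D\in\mathfrak{gl}(\mathfrak g,J)$. Then $D\in\mathrm{Der}(\mu)$ if and only if $D(\mathfrak z)\subset\mathfrak z$ and the endomorphisms $D_{00}:=\mathrm{Pr}_{\mathfrak z}D\,\mathrm{Pr}_{\mathfrak z}$, $D_{01}:=\mathrm{Pr}_{\mathfrak z}D\,\mathrm{Pr}_{\mathfrak z^\perp}$, $D_{11}:=\mathrm{Pr}_{\mathfrak z^\perp}D\,\mathrm{Pr}_{\mathfrak z^\perp}$ of $\mathfrak g$ satisfy $$D_{00}\mu_0(v,w)+D_{01}\mu_1(v,w)-\mu_0(D_{11}v,w)-\mu_0(v,D_{11}w)=0\quad\text{for all }v,w\in\mathfrak g,$$ and $D_{11}\in\mathrm{Der}(\mu_1)$.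
   Context: $\mathfrak g$ is a real vector space of dimension $2n$ with complex structure $J$ and inner product $\langle\cdot,\cdot\rangle$ for which $J$ is orthogonal. A bracket is a skew-symmetric bilinear map $\mathfrak g\times\mathfrak g\to\mathfrak g$; $\mathcal C$ is the set of brackets satisfying the Jacobi identity and $\nu(J\cdot,\cdot)=J\nu(\cdot,\cdot)$. $\mathfrak{gl}(\mathfrak g,J)=\{A\in\mathrm{End}(\mathfrak g):AJ=JA\}$. For a bracket $\nu$, $\mathrm{Der}(\nu)=\{D\in\mathfrak{gl}(\mathfrak g,J): D\nu(\cdot,\cdot)=\nu(D\cdot,\cdot)+\nu(\cdot,D\cdot)\}$. *)

From HB Require Import structures.
From mathcomp Require Import all_boot all_order all_algebra.
From mathcomp Require Import reals.
From Stdlib Require Import ClassicalEpsilon.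
Set Implicit Arguments. Unset Strict Implicit. Unset Printing Implicit Defensive.
Import Order.TTheory GRing.Theory Num.Theory.
Local Open Scope ring_scope.

Section Defs.
Variables (R : realType) (n : nat).
Local Notation g := 'rV[R]_(n.*2).

Definition linear_map (f : g -> g) : Prop :=
  forall (a : R) (u v : g), f (a *: u + v) = a *: f u + f v.

Definition complex_structure (J : g -> g) : Prop :=
  linear_map J /\ forall v, J (J v) = - v.

Definition inner_product (ip : g -> g -> R) : Prop :=
  (forall (a : R) (u v w : g), ip (a *: u + v) w = a * ip u w + ip v w) /\
  (forall u v, ip u v = ip v u) /\
  (forall u, u != 0 -> 0 < ip u u).

Definition orthogonal_J (ip : g -> g -> R) (J : g -> g) : Prop :=
  forall u v, ip (J u) (J v) = ip u v.

Definition bracket (nu : g -> g -> g) : Prop :=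
  (forall (a : R) (u v w : g), nu (a *: u + v) w = a *: nu u w + nu v w) /\
  (forall u v, nu u v = - nu v u).

Definition jacobi (nu : g -> g -> g) : Prop :=
  forall u v w, nu u (nu v w) + nu v (nu w u) + nu w (nu u v) = 0.

Definition in_C (J : g -> g) (nu : g -> g -> g) : Prop :=
  bracket nu /\ jacobi nu /\ forall u v, nu (J u) v = J (nu u v).

(* nilpotent: some k with [x_1,[x_2,...,[x_k,y]...]] = 0 for all x_i, y,
   i.e. the k-th term of the lower central series vanishes *)
Definition nilpotent (nu : g -> g -> g) : Prop :=
  exists k : nat, forall (xs : seq g) (y : g), size xs = k -> foldr nu y xs = 0.

Definition centre (nu : g -> g -> g) (x : g) : Prop := forall y, nu x y = 0.

Definition orth_compl (ip : g -> g -> R) (Z : g -> Prop) (v : g) : Prop :=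
  forall w, Z w -> ip v w = 0.

Definition orth_proj (ip : g -> g -> R) (Z : g -> Prop) (v : g) : g :=
  epsilon (inhabits (0 : g))
    (fun p => Z p /\ forall w, Z w -> ip (v - p) w = 0).

Definition gl_J (J : g -> g) (D : g -> g) : Prop :=
  linear_map D /\ forall v, D (J v) = J (D v).

Definition Der (J : g -> g) (nu : g -> g -> g) (D : g -> g) : Prop :=
  gl_J J D /\ forall u v, D (nu u v) = nu (D u) v + nu u (D v).

End Defs.

(* A derivation preserves the centre z, and once D(z) is contained in z we
   have Pr_{z^perp} D Pr_{z^perp} = Pr_{z^perp} D, while mu(x, y) only depends
   on the z^perp-components of x and y.  Hence the two displayed conditions
   are exactly the z- and z^perp-components of the derivation defect
   D mu(v, w) - mu(D v, w) - mu(v, D w), which vanishes iff both do.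
   The orthogonal projections exist because g is finite-dimensional: the
   subspace is a vspace, and Gram-Schmidt along a spanning sequence produces
   the projection. *)

From HB Require Import structures.
From mathcomp Require Import all_boot all_order all_algebra.
From mathcomp Require Import reals.
From Stdlib Require Import Classical ClassicalEpsilon.
Set Implicit Arguments. Unset Strict Implicit. Unset Printing Implicit Defensive.
Import Order.TTheory GRing.Theory Num.Theory.
Local Open Scope ring_scope.

Lemma ltn_dimv_add_line (K : fieldType) (vT : vectType K) (U : {vspace vT}) x :
  x \notin U -> (\dim U < \dim (U + <[x]>))%N.
Proof.
move=> xU; rewrite (ltn_leqif (dimv_leqif_eq (addvSl U <[x]>))).
by apply: contra xU => /eqP ->; apply: (subvP (addvSr U _)); apply: memv_line.
Qed.

Section RowSpace.
Variables (R : realType) (n : nat).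
Local Notation g := 'rV[R]_(n.*2).

Section LinearMap.
Variable f : g -> g.
Hypothesis f_lin : linear_map f.

Lemma linear_mapD u v : f (u + v) = f u + f v.
Proof. by have := f_lin 1 u v; rewrite !scale1r. Qed.

Lemma linear_map0 : f 0 = 0.
Proof. by apply: (@addrI _ (f 0)); rewrite -linear_mapD !addr0. Qed.

Lemma linear_mapZ a u : f (a *: u) = a *: f u.
Proof. by rewrite -[a *: u]addr0 f_lin linear_map0 addr0. Qed.

Lemma linear_mapN u : f (- u) = - f u.
Proof. by rewrite -scaleN1r linear_mapZ scaleN1r. Qed.

Lemma linear_mapB u v : f (u - v) = f u - f v.
Proof. by rewrite linear_mapD linear_mapN. Qed.

End LinearMap.

Definition subspace (Z : g -> Prop) : Prop :=
  [/\ Z 0, forall u v, Z u -> Z v -> Z (u + v) & forall (a : R) u, Z u -> Z (a *: u)].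

Lemma subspace_vspace Z : subspace Z -> exists U : {vspace g}, forall x, Z x <-> x \in U.
Proof.
case=> Z0 ZD ZZ.
suff [U UZ ZU] : exists2 U : {vspace g}, forall x, x \in U -> Z x & forall x, Z x -> x \in U.
  by exists U => x; split; [apply: ZU | apply: UZ].
suff grow k (U : {vspace g}) : (forall x, x \in U -> Z x) ->
    (\dim {:g} <= \dim U + k)%N ->
    exists2 V : {vspace g}, forall x, x \in V -> Z x & forall x, Z x -> x \in V.
  by apply: (grow (\dim {:g}) 0%VS) => [x|]; rewrite ?memv0 ?leq_addl // => /eqP ->.
elim: k U => [|k IH] U UZ dimU;
  have [[x [Zx xU]] | none] := classic (exists x, Z x /\ x \notin U);
  try by exists U => // y Zy; apply/negPn/negP => yU; apply: none; exists y.
- have := ltn_dimv_add_line xU; rewrite ltnNge (leq_trans (dimvS (subvf _))) //.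
  by rewrite addn0 in dimU.
- apply: (IH (U + <[x]>)%VS).
    by move=> y /memv_addP [u uU [_ /vlineP [a ->] ->]]; apply: ZD; [apply: UZ | apply: ZZ].
  by rewrite (leq_trans dimU) // addnS -addSn leq_add2r ltn_dimv_add_line.
Qed.

Section InnerProduct.
Variable ip : g -> g -> R.
Hypothesis ip_ok : inner_product ip.

Lemma ip_sym u v : ip u v = ip v u.
Proof. by have [_ [sym _]] := ip_ok. Qed.

Lemma ip_gt0 u : u != 0 -> 0 < ip u u.
Proof. by have [_ [_ pos]] := ip_ok; apply: pos. Qed.

Lemma ipDl u v w : ip (u + v) w = ip u w + ip v w.
Proof. by have [ipl _] := ip_ok; have := ipl 1 u v w; rewrite scale1r mul1r. Qed.

Lemma ip0l w : ip 0 w = 0.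
Proof. by apply: (@addrI _ (ip 0 w)); rewrite -ipDl !addr0. Qed.

Lemma ipZl a u w : ip (a *: u) w = a * ip u w.
Proof.
by have [ipl _] := ip_ok; rewrite -[a *: u]addr0 ipl ip0l addr0.
Qed.

Lemma ipNl u w : ip (- u) w = - ip u w.
Proof. by rewrite -scaleN1r ipZl mulN1r. Qed.

Lemma ipBl u v w : ip (u - v) w = ip u w - ip v w.
Proof. by rewrite ipDl ipNl. Qed.

Lemma ipDr u v w : ip w (u + v) = ip w u + ip w v.
Proof. by rewrite !(ip_sym w) ipDl. Qed.

Lemma ipZr a u w : ip w (a *: u) = a * ip w u.
Proof. by rewrite !(ip_sym w) ipZl. Qed.

Lemma ip0r w : ip w 0 = 0.
Proof. by rewrite ip_sym ip0l. Qed.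

Lemma span_orth_proj (s : seq g) v :
  exists2 p, p \in <<s>>%VS & forall w, w \in <<s>>%VS -> ip (v - p) w = 0.
Proof.
elim: s v => [|x s IH] v.
  exists 0 => [|w]; first exact: mem0v.
  by rewrite span_nil memv0 => /eqP ->; rewrite ip0r.
have [px px_s px_orth] := IH x; have [pv pv_s pv_orth] := IH v.
have s_sub : {subset <<s>>%VS <= <<x :: s>>%VS}.
  by apply/subvP; rewrite span_cons addvSr.
pose y := x - px.
have y_span : y \in <<x :: s>>%VS.
  by apply: rpredB; [exact/memv_span/mem_head | exact: s_sub].
have span_consP w : w \in <<x :: s>>%VS ->
    exists a, exists2 t, t \in <<s>>%VS & w = a *: y + t.
  rewrite span_cons => /memv_addP [_ /vlineP [a ->] [t t_s ->]].
  exists a, (a *: px + t); first by rewrite rpredD ?rpredZ.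
  by rewrite /y scalerBr addrA subrK.
have [y0 | y_neq0] := eqVneq y 0.
  exists pv => [|w /span_consP [a [t t_s ->]]]; first exact: s_sub _ pv_s.
  by rewrite y0 scaler0 add0r pv_orth.
pose c := ip v y / ip y y.
exists (pv + c *: y); first exact: rpredD (s_sub _ pv_s) (rpredZ _ y_span).
move=> w /span_consP [a [t t_s ->]].
have vy : ip (v - pv) y = ip v y by rewrite ipBl (ip_sym pv) px_orth // subr0.
have yy : ip y y != 0 by rewrite gt_eqF ?ip_gt0.
rewrite opprD addrA ipBl ipDr ipZr vy pv_orth // ipZl (ipDr _ _ y) ipZr (px_orth t) //.
by rewrite !addr0 /c mulrCA divfK // subrr.
Qed.

Section OrthProj.
Variable Z : g -> Prop.
Hypothesis Z_sub : subspace Z.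
Local Notation P := (orth_proj ip Z).

Lemma orth_projP v : Z (P v) /\ forall w, Z w -> ip (v - P v) w = 0.
Proof.
have [U ZU] := subspace_vspace Z_sub.
have [p] := span_orth_proj (vbasis U) v; rewrite (span_basis (vbasisP U)) => pU p_orth.
apply: (epsilon_spec (inhabits 0) (fun p => Z p /\ _)); exists p.
by split=> [|w /ZU]; [exact/ZU | exact: p_orth].
Qed.

Lemma orth_proj_unique v p : Z p -> (forall w, Z w -> ip (v - p) w = 0) -> P v = p.
Proof.
move=> Zp p_orth; have [ZPv Pv_orth] := orth_projP v.
have [_ ZD ZZ] := Z_sub.
have Zd : Z (p - P v) by apply: ZD => //; rewrite -scaleN1r; apply: ZZ.
have d_split : p - P v = (v - P v) - (v - p) by rewrite opprB [RHS]addrC subrKA.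
have d_null : ip (p - P v) (p - P v) = 0.
  by rewrite {1}d_split ipBl Pv_orth ?p_orth ?subrr.
apply/eqP; rewrite eq_sym -subr_eq0; apply/negPn/negP => /ip_gt0.
by rewrite d_null ltxx.
Qed.

Lemma orth_proj_id x : Z x -> P x = x.
Proof. by move=> Zx; apply: orth_proj_unique => // w _; rewrite subrr ip0l. Qed.

Lemma orth_proj_idem v : P (P v) = P v.
Proof. exact/orth_proj_id/(orth_projP v).1. Qed.

Lemma orth_proj_linear : linear_map P.
Proof.
move=> a u v; apply: orth_proj_unique => [|w Zw].
  have [_ ZD ZZ] := Z_sub.
  by apply: ZD; [apply: ZZ|]; apply: (orth_projP _).1.
rewrite opprD addrACA -scalerBr ipDl ipZl.
by rewrite !(orth_projP _).2 // mulr0 addr0.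
Qed.

Lemma orth_proj_J J : complex_structure J -> orthogonal_J ip J ->
  (forall x, Z x -> Z (J x)) -> forall v, P (J v) = J (P v).
Proof.
move=> [J_lin JJ] J_orth ZJ v.
have [ZPv Pv_orth] := orth_projP v.
apply: orth_proj_unique => [|w Zw]; first exact: ZJ.
by rewrite -(linear_mapB J_lin) -J_orth JJ ipNl Pv_orth ?oppr0 //; apply: ZJ.
Qed.

End OrthProj.

Lemma orth_compl_subspace Z : subspace (orth_compl ip Z).
Proof.
split=> [w _ | u v Zu Zv w Zw | a u Zu w Zw]; first exact: ip0l.
  by rewrite ipDl Zu ?Zv ?addr0.
by rewrite ipZl Zu ?mulr0.
Qed.

Lemma orth_proj_compl Z : subspace Z ->
  forall v, orth_proj ip (orth_compl ip Z) v = v - orth_proj ip Z v.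
Proof.
move=> Z_sub v; have [ZPv Pv_orth] := orth_projP Z_sub v.
apply: (orth_proj_unique (orth_compl_subspace Z)) => // w Z'w.
by rewrite subKr ip_sym; apply: Z'w.
Qed.

End InnerProduct.

Section Bracket.
Variable mu : g -> g -> g.
Hypothesis mu_br : bracket mu.

Lemma bracket_linearl w : linear_map (mu^~ w).
Proof. by case: mu_br => mu_lin _ a u v; apply: mu_lin. Qed.

Lemma bracket_linearr w : linear_map (mu w).
Proof.
by case: mu_br => mu_lin mu_skew a u v; rewrite mu_skew mu_lin opprD -scalerN -!mu_skew.
Qed.

Lemma centre_subspace : subspace (centre mu).
Proof.
split=> [y | u v zu zv y | a u zu y].
- exact: linear_map0 (bracket_linearl y).
- by rewrite (linear_mapD (bracket_linearl y)) zu zv addr0.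
- by rewrite (linear_mapZ (bracket_linearl y)) zu scaler0.
Qed.

Lemma centre_bracketr x y : centre mu x -> mu y x = 0.
Proof. by case: mu_br => _ mu_skew zx; rewrite mu_skew zx oppr0. Qed.

Lemma centre_J J : linear_map J -> (forall u v, mu (J u) v = J (mu u v)) ->
  forall x, centre mu x -> centre mu (J x).
Proof. by move=> J_lin mu_J x zx y; rewrite mu_J zx linear_map0. Qed.

Lemma Der_centre_stable J D : Der J mu D -> forall x, centre mu x -> centre mu (D x).
Proof.
move=> [[D_lin _] D_der] x zx y.
have := D_der x y; rewrite !zx addr0 => <-.
exact: linear_map0.
Qed.

End Bracket.

Definition der_defect (nu : g -> g -> g) (D : g -> g) u v : g :=
  D (nu u v) - (nu (D u) v + nu u (D v)).

Lemma DerP J nu D : Der J nu D <-> gl_J J D /\ forall u v, der_defect nu D u v = 0.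
Proof.
rewrite /der_defect; split=> [] [D_gl D_der]; split=> // u v.
  by rewrite D_der subrr.
by apply/eqP; rewrite -subr_eq0 D_der.
Qed.

Section CentreDecomposition.
Variables (ip : g -> g -> R) (mu : g -> g -> g).
Hypotheses (ip_ok : inner_product ip) (mu_br : bracket mu).
Local Notation z := (centre mu).
Local Notation P := (orth_proj ip z).
Local Notation Q := (orth_proj ip (orth_compl ip z)).

Let z_sub : subspace z := centre_subspace mu_br.
Let z'_sub : subspace (orth_compl ip z) := orth_compl_subspace ip_ok z.
Let P_lin : linear_map P := orth_proj_linear ip_ok z_sub.
Let Q_lin : linear_map Q := orth_proj_linear ip_ok z'_sub.
Let P_idem v : P (P v) = P v := orth_proj_idem ip_ok z_sub v.
Let Q_idem v : Q (Q v) = Q v := orth_proj_idem ip_ok z'_sub v.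
Let Q_def v : Q v = v - P v := orth_proj_compl ip_ok z_sub v.

Lemma proj_centre_add v : P v + Q v = v.
Proof. by rewrite Q_def addrC subrK. Qed.

Lemma proj_centre_compl_eq0 x : P x = 0 -> Q x = 0 -> x = 0.
Proof. by move=> Px0 Qx0; rewrite -[x]proj_centre_add Px0 Qx0 addr0. Qed.

Lemma proj_compl_centre x : z x -> Q x = 0.
Proof. by move=> zx; rewrite Q_def orth_proj_id ?subrr. Qed.

Lemma bracket_proj_compll x y : mu (Q x) y = mu x y.
Proof.
rewrite Q_def (linear_mapB (bracket_linearl mu_br y)).
by rewrite (orth_projP ip_ok z_sub x).1 subr0.
Qed.

Lemma bracket_proj_complr x y : mu y (Q x) = mu y x.
Proof.
rewrite Q_def (linear_mapB (bracket_linearr mu_br y)).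
by rewrite (centre_bracketr mu_br y (orth_projP ip_ok z_sub x).1) subr0.
Qed.

Lemma gl_J_proj_compl J D : complex_structure J -> orthogonal_J ip J ->
  (forall u v, mu (J u) v = J (mu u v)) -> gl_J J D -> gl_J J (fun v => Q (D (Q v))).
Proof.
move=> J_cs J_orth mu_J [D_lin DJ]; have [J_lin _] := J_cs.
have PJ := orth_proj_J ip_ok z_sub J_cs J_orth (centre_J J_lin mu_J).
have QJ v : Q (J v) = J (Q v) by rewrite !Q_def PJ (linear_mapB J_lin).
split=> [a u v | v]; first by rewrite Q_lin D_lin Q_lin.
by rewrite QJ DJ QJ.
Qed.

Section BlockDefects.
Variable D : g -> g.
Hypotheses (D_lin : linear_map D) (D_z : forall x, z x -> z (D x)).

Lemma proj_compl_D_compl x : Q (D (Q x)) = Q (D x).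
Proof.
have zDPx : z (D (P x)) by apply/D_z/(orth_projP ip_ok z_sub x).1.
rewrite -{2}[x]proj_centre_add (linear_mapD D_lin) (linear_mapD Q_lin).
by rewrite (proj_compl_centre zDPx) add0r.
Qed.

Lemma centre_block_defect v w :
  P (D (P (P (mu v w)))) + P (D (Q (Q (mu v w))))
    - P (mu (Q (D (Q v))) w) - P (mu v (Q (D (Q w)))) = P (der_defect mu D v w).
Proof.
rewrite P_idem Q_idem !proj_compl_D_compl bracket_proj_compll bracket_proj_complr.
rewrite -(linear_mapD P_lin) -(linear_mapD D_lin) proj_centre_add.
by rewrite /der_defect (linear_mapB P_lin) (linear_mapD P_lin) opprD addrA.
Qed.

Lemma compl_block_defect v w :
  der_defect (fun v w => Q (mu v w)) (fun v => Q (D (Q v))) v w = Q (der_defect mu D v w).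
Proof.
rewrite /der_defect Q_idem !proj_compl_D_compl bracket_proj_compll bracket_proj_complr.
by rewrite (linear_mapB Q_lin) (linear_mapD Q_lin).
Qed.

End BlockDefects.

End CentreDecomposition.

End RowSpace.

Theorem proposition3p2 (R : realType) (n : nat)
  (J : 'rV[R]_(n.*2) -> 'rV[R]_(n.*2))
  (ip : 'rV[R]_(n.*2) -> 'rV[R]_(n.*2) -> R)
  (mu : 'rV[R]_(n.*2) -> 'rV[R]_(n.*2) -> 'rV[R]_(n.*2))
  (D : 'rV[R]_(n.*2) -> 'rV[R]_(n.*2)) :
  complex_structure J -> inner_product ip -> orthogonal_J ip J ->
  in_C J mu -> nilpotent mu -> gl_J J D ->
  let z := centre mu in
  let Pz := orth_proj ip z in
  let Pzp := orth_proj ip (orth_compl ip z) in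
  let mu0 := fun v w => Pz (mu v w) in
  let mu1 := fun v w => Pzp (mu v w) in
  let D00 := fun v => Pz (D (Pz v)) in
  let D01 := fun v => Pz (D (Pzp v)) in
  let D11 := fun v => Pzp (D (Pzp v)) in
  Der J mu D <->
  ((forall x, z x -> z (D x)) /\
   (forall v w, D00 (mu0 v w) + D01 (mu1 v w)
                - mu0 (D11 v) w - mu0 v (D11 w) = 0) /\
   Der J mu1 D11).
Proof.
move=> J_cs ip_ok J_orth [mu_br [_ mu_J]] _ D_gl; cbv zeta.
have [D_lin _] := D_gl.
have P_lin := orth_proj_linear ip_ok (centre_subspace mu_br).
have Q_lin := orth_proj_linear ip_ok (orth_compl_subspace ip_ok (centre mu)).
split=> [D_der | [D_z [block0 D11_der]]].
- have D_z := Der_centre_stable D_der.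
  have [_ defect0] := (DerP _ _ _).1 D_der.
  split=> //; split=> [v w|].
    by rewrite centre_block_defect // defect0 (linear_map0 P_lin).
  apply/DerP; split; first exact: gl_J_proj_compl.
  by move=> u v; rewrite compl_block_defect // defect0 (linear_map0 Q_lin).
- have [_ D11_defect0] := (DerP _ _ _).1 D11_der.
  apply/DerP; split=> // u v; apply: (proj_centre_compl_eq0 ip_ok mu_br).
    by rewrite -centre_block_defect.
  by rewrite -compl_block_defect.
Qed.
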